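(* Let $A\in\mathbb{R}^{s\times n}$ have rank $s\le n$ and let $y\in(\ker A)^\perp$ be a unit vector. Then the vector $v=(A^\dagger)^Ty\in\mathbb{R}^s$ satisfies $$\|v\|=\left|\frac{\det A^{(y)}}{\det\tilde A}\right|=\frac{1}{\|(Ay)^\perp\|}.$$
   Context: $A^\dagger=A^T(AA^T)^{-1}$ is the Moore–Penrose inverse. $\tilde A\colon(\ker A)^\perp\to\mathbb{R}^s$ is the restriction of $A$; $A^{(y)}\colon(\mathbb{R}y\oplus\ker A)^\perp\to\operatorname{im}A^{(y)}$ is the restriction of $A$ to the orthogonal complement of $\mathbb{R}y\oplus\ker A$, viewed as a map onto its $(s-1)$-dimensional image. Determinants of linear maps between inner-product spaces of equal dimension are taken with respect to orthonormal bases (well defined up to sign). $(Ay)^\perp$ denotes the orthogonal projection of $Ay$ onto the orthogonal complement in $\mathbb{R}^s$ of $\operatorname{im}A^{(y)}$, so that $|\det\tilde A|=|\det A^{(y)}|\cdot\|(Ay)^\perp\|$. *)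

From HB Require Import structures.
From mathcomp Require Import all_boot all_order all_algebra.
Set Implicit Arguments. Unset Strict Implicit. Unset Printing Implicit Defensive.
Import Order.TTheory GRing.Theory Num.Theory.
Local Open Scope ring_scope.

Definition dotv (R : rcfType) n (u v : 'rV[R]_n) : R := (u *m v^T) 0 0.
Definition normv (R : rcfType) n (v : 'rV[R]_n) : R := Num.sqrt (dotv v v).

(* orthogonal complement of the row space of U: its row space is {x | x *m U^T = 0} *)
Definition perpmx (R : rcfType) k n (U : 'M[R]_(k, n)) : 'M[R]_n := kermx U^T.

(* ker A (as row vectors x with A x^T = 0) and (ker A)^perp *)
Definition kerA (R : rcfType) s n (A : 'M[R]_(s, n)) : 'M[R]_n := kermx A^T.
Definition kerperp (R : rcfType) s n (A : 'M[R]_(s, n)) : 'M[R]_n := perpmx (kerA A).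

(* (R y (+) ker A)^perp : domain of A^(y) *)
Definition Wy (R : rcfType) s n (A : 'M[R]_(s, n)) (y : 'rV[R]_n) : 'M[R]_n :=
  perpmx (col_mx y (kerA A)).
(* image of A^(y) inside R^s (x |-> A x, as row vectors x |-> x A^T) *)
Definition imy (R : rcfType) s n (A : 'M[R]_(s, n)) (y : 'rV[R]_n) : 'M[R]_(n, s) :=
  Wy A y *m A^T.

Definition onb (R : rcfType) k m n (Q : 'M[R]_(k, n)) (U : 'M[R]_(m, n)) : Prop :=
  Q *m Q^T = 1%:M /\ (Q == U)%MS.

Definition perpproj (R : rcfType) m n (u : 'rV[R]_n) (U : 'M[R]_(m, n)) : 'rV[R]_n :=
  u *m proj_mx (perpmx U) (<<U>>%MS).

Definition pinv (R : rcfType) s n (A : 'M[R]_(s, n)) : 'M[R]_(n, s) :=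
  A^T *m invmx (A *m A^T).

From HB Require Import structures.
From mathcomp Require Import all_boot all_order all_algebra.
From mathcomp Require Import ring.
Import Order.TTheory GRing.Theory Num.Theory.
Set Implicit Arguments. Unset Strict Implicit. Unset Printing Implicit Defensive.
Local Open Scope ring_scope.

(* Write y = c A (possible since (ker A)^perp is the row space of A); then
   v^T = y A^dagger = c.  Extending orthonormal bases Qy of (Ry + ker A)^perp and
   Py of im A^(y) by y and by c/|c|, which is orthogonal to im A^(y), turns the
   matrix of A~ into a block triangular one whose corner entry is
   <y A^T, c/|c|> = |y|^2/|c| = 1/|c|; hence |det A~| = |det A^(y)|/|c|.  For
   the second identity, y A^T - c/|c|^2 is orthogonal to c, hence lies in the
   hyperplane im A^(y) = c^perp, so (Ay)^perp = c/|c|^2 has norm 1/|c|. *)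

Section BlockDeterminant.
Variable R : comNzRingType.

Lemma det_col_mx_mul m n (u : 'rV[R]_n) (X : 'M_(m, n)) (B : 'M_(n, m.+1))
    (e : 'rV_m.+1) (Y : 'M_(m, m.+1)) :
  X *m B *m e^T = 0 ->
  \det (col_mx u X *m B *m (col_mx e Y)^T) = (u *m B *m e^T) 0 0 * \det (X *m B *m Y^T).
Proof.
move=> XBe; rewrite tr_col_mx mul_col_mx mul_col_row XBe.
by rewrite (det_ublock (u *m B *m e^T)) det_mx11.
Qed.

End BlockDeterminant.

Section Orthonormal.
Variable R : numFieldType.

Lemma orthonormal_rank m n (Q : 'M[R]_(m, n)) : Q *m Q^T = 1%:M -> \rank Q = m.
Proof.
move=> QQ; apply/eqP; rewrite eqn_leq rank_leq_row /=.
by rewrite -{1}(mxrank1 R m) -QQ mxrankM_maxl.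
Qed.

Lemma orthonormal_col_mx m1 m2 n (U : 'M[R]_(m1, n)) (V : 'M_(m2, n)) :
  U *m U^T = 1%:M -> V *m V^T = 1%:M -> V *m U^T = 0 ->
  col_mx U V *m (col_mx U V)^T = 1%:M.
Proof.
move=> UU VV VU; rewrite tr_col_mx mul_col_row UU VV VU.
by rewrite -[U *m V^T]trmxK trmx_mul trmxK VU trmx0 -scalar_mx_block.
Qed.

Lemma orthonormal_change m n (Q1 Q2 : 'M[R]_(m, n)) :
  Q1 *m Q1^T = 1%:M -> Q2 *m Q2^T = 1%:M -> (Q1 <= Q2)%MS ->
  exists2 D : 'M_m, Q1 = D *m Q2 & `|\det D| = 1.
Proof.
move=> Q1Q1 Q2Q2 /submxP[D Q1D]; exists D => //.
have DD : D *m D^T = 1%:M.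
  by rewrite -Q1Q1 Q1D trmx_mul mulmxA -(mulmxA D) Q2Q2 mulmx1.
have : \det D ^+ 2 = 1 by rewrite expr2 -{2}(det_tr D) -det_mulmx DD det1.
by move/eqP; rewrite sqrf_eq1 => /orP[] /eqP->; rewrite ?normrN normr1.
Qed.

Lemma normr_det_orthonormal_change m n p (Q1 Q2 : 'M[R]_(m, n))
    (P1 P2 : 'M_(m, p)) (M : 'M_(n, p)) :
  Q1 *m Q1^T = 1%:M -> Q2 *m Q2^T = 1%:M -> (Q1 <= Q2)%MS ->
  P1 *m P1^T = 1%:M -> P2 *m P2^T = 1%:M -> (P1 <= P2)%MS ->
  `|\det (Q1 *m M *m P1^T)| = `|\det (Q2 *m M *m P2^T)|.
Proof.
move=> Q1Q1 Q2Q2 Q12 P1P1 P2P2 P12.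
have [D -> detD] := orthonormal_change Q1Q1 Q2Q2 Q12.
have [E -> detE] := orthonormal_change P1P1 P2P2 P12.
rewrite trmx_mul -!mulmxA det_mulmx !mulmxA det_mulmx det_tr !normrM.
by rewrite detD detE mul1r mulr1.
Qed.

End Orthonormal.

Section Euclidean.
Variable R : rcfType.

Lemma mulmx_tr_eq0 m n (M : 'M[R]_(m, n)) : (M *m M^T == 0) = (M == 0).
Proof.
apply/eqP/eqP=> [MM|->]; last by rewrite mul0mx.
apply/matrixP=> i j; rewrite mxE.
have /eqP : (M *m M^T) i i = 0 by rewrite MM mxE.
rewrite mxE psumr_eq0 => [/allP/(_ j (mem_index_enum j))|k _]; rewrite mxE -expr2.
  by rewrite sqrf_eq0 => /eqP.
exact: sqr_ge0.
Qed.

Lemma mulmx_tr_dotv n (u : 'rV[R]_n) : u *m u^T = (dotv u u)%:M.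
Proof. exact: mx11_scalar. Qed.

Lemma dotv_ge0 n (u : 'rV[R]_n) : 0 <= dotv u u.
Proof. by rewrite /dotv mxE; apply: sumr_ge0 => i _; rewrite mxE -expr2 sqr_ge0. Qed.

Lemma dotv_eq0 n (u : 'rV[R]_n) : (dotv u u == 0) = (u == 0).
Proof.
rewrite -mulmx_tr_eq0 mulmx_tr_dotv.
by apply/eqP/eqP=> [->|/matrixP/(_ 0 0)]; rewrite ?raddf0 // !mxE eqxx mulr1n.
Qed.

Lemma sqr_normv n (u : 'rV[R]_n) : normv u ^+ 2 = dotv u u.
Proof. by rewrite sqr_sqrtr ?dotv_ge0. Qed.

Lemma normv_gt0 n (u : 'rV[R]_n) : (0 < normv u) = (u != 0).
Proof. by rewrite sqrtr_gt0 lt_def dotv_ge0 dotv_eq0 andbT. Qed.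

Lemma normvZ n a (u : 'rV[R]_n) : normv (a *: u) = `|a| * normv u.
Proof.
rewrite /normv /dotv linearZ -scalemxAl -scalemxAr !mxE mulrA -expr2.
by rewrite sqrtrM ?sqr_ge0 // sqrtr_sqr.
Qed.

Lemma normv1_mulmx_tr n (u : 'rV[R]_n) : normv u = 1 -> u *m u^T = 1%:M.
Proof. by move=> u1; rewrite mulmx_tr_dotv -sqr_normv u1 expr1n. Qed.

Lemma normv_normalize n (u : 'rV[R]_n) : u != 0 -> normv ((normv u)^-1 *: u) = 1.
Proof.
rewrite -normv_gt0 => u_gt0.
by rewrite normvZ ger0_norm ?invr_ge0 ?ltW // mulVf ?gt_eqF.
Qed.

Lemma submx_mul0 m1 m2 n p (X : 'M[R]_(m1, n)) (V : 'M_(m2, n)) (B : 'M_(n, p)) :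
  (X <= V)%MS -> V *m B = 0 -> X *m B = 0.
Proof. by case/submxP=> D -> VB; rewrite -mulmxA VB mulmx0. Qed.

Lemma mxrank_perpmx k n (U : 'M[R]_(k, n)) : \rank (perpmx U) = (n - \rank U)%N.
Proof. by rewrite mxrank_ker mxrank_tr. Qed.

Lemma perpmxK k n (U : 'M[R]_(k, n)) : (perpmx (perpmx U) == U)%MS.
Proof.
have sU : (U <= perpmx (perpmx U))%MS.
  by apply/sub_kermxP; rewrite /perpmx -[U *m _]trmxK trmx_mul trmxK mulmx_ker trmx0.
by rewrite sU andbT -(mxrank_leqif_sup sU).2 !mxrank_perpmx subKn ?rank_leq_col.
Qed.

Lemma perpmx_cap0 k n (U : 'M[R]_(k, n)) : (perpmx U :&: <<U>>)%MS = 0.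
Proof.
set X := (_ :&: _)%MS.
have /submxP[D XD] : (X <= U)%MS by rewrite (submx_trans (capmxSr _ _)) ?genmxE.
have XU : X *m U^T = 0 by apply/sub_kermxP; apply: capmxSl.
by apply/eqP; rewrite -mulmx_tr_eq0 {2}XD trmx_mul mulmxA XU mul0mx.
Qed.

Lemma perpprojDl m n (U : 'M[R]_(m, n)) (a b : 'rV_n) :
  (a <= perpmx U)%MS -> (b <= U)%MS -> perpproj (a + b) U = a.
Proof.
move=> aU bU; rewrite /perpproj mulmxDl (proj_mx_id (perpmx_cap0 U) aU).
by rewrite (proj_mx_0 (perpmx_cap0 U)) ?genmxE // addr0.
Qed.

Lemma perpmx_row_sub m n (c : 'rV[R]_n) (V : 'M_(m, n)) :
  c != 0 -> V *m c^T = 0 -> \rank V = n.-1 -> (perpmx c <= V)%MS.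
Proof.
move=> c0 Vc rV; have cV : (V <= perpmx c)%MS by apply/sub_kermxP.
rewrite -(mxrank_leqif_sup cV).2 mxrank_perpmx rV.
by rewrite rank_rV c0 subn1.
Qed.

Lemma unitmx_gram s n (A : 'M[R]_(s, n)) : row_free A -> A *m A^T \in unitmx.
Proof.
rewrite -!kermx_eq0 -row_free_unit -kermx_eq0 => /eqP kA0.
rewrite -submx0 -kA0; apply/sub_kermxP/eqP; rewrite -mulmx_tr_eq0.
by rewrite trmx_mul mulmxA -(mulmxA _ A) mulmx_ker mul0mx.
Qed.

Lemma mulmx_pinv s n (A : 'M[R]_(s, n)) : row_free A -> A *m pinv A = 1%:M.
Proof. by move=> fA; rewrite /pinv mulmxA mulmxV ?unitmx_gram. Qed.

Lemma unitmx_frame_mul s n (Q A : 'M[R]_(s, n)) (P : 'M_s) :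
  (Q :=: A)%MS -> row_free A -> P *m P^T = 1%:M -> Q *m A^T *m P^T \in unitmx.
Proof.
move=> QA fA PP; have /submxP[D QD] : (Q <= A)%MS by rewrite QA.
have uD : D \in unitmx.
  rewrite -row_free_unit /row_free eqn_leq rank_leq_row /=.
  by apply: leq_trans (mxrankM_maxl D A); rewrite -QD QA (eqnP fA).
have [_ uP] := mulmx1_unit PP.
by rewrite QD -(mulmxA D) !unitmx_mul uD unitmx_gram.
Qed.

End Euclidean.

Section KernelComplements.
Variables (R : rcfType) (s n : nat) (A : 'M[R]_(s, n)) (y : 'rV[R]_n).

Lemma kerperpE : (kerperp A :=: A)%MS.
Proof. exact/eqmxP/perpmxK. Qed.

Lemma Wy_orth : Wy A y *m y^T = 0 /\ Wy A y *m (kerA A)^T = 0.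
Proof.
have /eqP : Wy A y *m (col_mx y (kerA A))^T = 0 := mulmx_ker _.
by rewrite tr_col_mx mul_mx_row row_mx_eq0 => /andP[/eqP-> /eqP->].
Qed.

Lemma Wy_mul_tr : Wy A y *m y^T = 0.
Proof. by case: Wy_orth. Qed.

Lemma Wy_sub_kerperp : (Wy A y <= kerperp A)%MS.
Proof. by case: Wy_orth => _ /sub_kermxP. Qed.

Lemma imy_mul_tr (c : 'rV_s) : y = c *m A -> imy A y *m c^T = 0.
Proof. by move=> yc; rewrite /imy -mulmxA -trmx_mul -yc Wy_mul_tr. Qed.

End KernelComplements.

Section RowSpaceUnitVector.
Variables (R : rcfType) (k n : nat) (A : 'M[R]_(k.+1, n)) (y : 'rV[R]_n) (c : 'rV[R]_k.+1).
Hypotheses (yc : y = c *m A) (y1 : normv y = 1).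

Let yy : y *m y^T = 1%:M := normv1_mulmx_tr y1.

Lemma coef_neq0 : c != 0.
Proof.
apply: contraTneq (@ltr01 R) => c0.
by rewrite -y1 normv_gt0 yc c0 mul0mx eqxx.
Qed.

Lemma mulmx_tr_coef : y *m A^T *m c^T = 1%:M.
Proof. by rewrite -mulmxA -trmx_mul -yc yy. Qed.

Lemma normr_det_frame (Q : 'M_(k.+1, n)) (P0 : 'M_k.+1) (Qy : 'M_(k, n))
    (Py : 'M_(k, k.+1)) :
  Q *m Q^T = 1%:M -> (A <= Q)%MS -> P0 *m P0^T = 1%:M ->
  Qy *m Qy^T = 1%:M -> (Qy <= Wy A y)%MS ->
  Py *m Py^T = 1%:M -> (Py <= imy A y)%MS ->
  normv c * `|\det (Q *m A^T *m P0^T)| = `|\det (Qy *m A^T *m Py^T)|.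
Proof.
move=> QQ AQ PP QyQy QyW PyPy PyI.
pose e := (normv c)^-1 *: c.
have ee : e *m e^T = 1%:M := normv1_mulmx_tr (normv_normalize coef_neq0).
have Icperp : imy A y *m e^T = 0 by rewrite linearZ -scalemxAr imy_mul_tr ?scaler0.
have Qyy : Qy *m y^T = 0 := submx_mul0 QyW (Wy_mul_tr A y).
have Pye : Py *m e^T = 0 := submx_mul0 PyI Icperp.
have QyAe : Qy *m A^T *m e^T = 0 := submx_mul0 (submxMr _ QyW) Icperp.
have QyA : (Qy <= A)%MS by rewrite -(kerperpE A) (submx_trans QyW) ?Wy_sub_kerperp.
have Q'Q : (col_mx y Qy <= Q)%MS.
  by rewrite col_mx_sub !(submx_trans _ AQ) // yc submxMl.
have P'P : (col_mx e Py <= P0)%MS.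
  by rewrite (submx_trans (submx1 _)) // sub1mx row_full_unit; case: (mulmx1_unit PP).
rewrite -(normr_det_orthonormal_change A^T (orthonormal_col_mx yy QyQy Qyy) QQ Q'Q
  (orthonormal_col_mx ee PyPy Pye) PP P'P).
have c_gt0 : 0 < normv c by rewrite normv_gt0 coef_neq0.
rewrite det_col_mx_mul // normrM linearZ -scalemxAr mulmx_tr_coef !mxE mulr1.
by rewrite ger0_norm ?invr_ge0 ?ltW // mulrA mulfV ?gt_eqF ?mul1r.
Qed.

Lemma normv_coef_det_ratio (Q : 'M_(k.+1, n)) (P0 : 'M_k.+1) (Qy : 'M_(k, n))
    (Py : 'M_(k, k.+1)) :
  row_free A -> Q *m Q^T = 1%:M -> (Q :=: A)%MS -> P0 *m P0^T = 1%:M ->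
  Qy *m Qy^T = 1%:M -> (Qy <= Wy A y)%MS ->
  Py *m Py^T = 1%:M -> (Py <= imy A y)%MS ->
  normv c = `|\det (Qy *m A^T *m Py^T)| / `|\det (Q *m A^T *m P0^T)|.
Proof.
move=> fA QQ QA PP QyQy QyW PyPy PyI.
have AQ : (A <= Q)%MS by rewrite QA.
have hdet := normr_det_frame QQ AQ PP QyQy QyW PyPy PyI.
have : \det (Q *m A^T *m P0^T) != 0 by rewrite -unitfE -unitmxE unitmx_frame_mul.
by rewrite -normr_eq0 => dQ0; rewrite -hdet mulfK.
Qed.

Lemma perpproj_imy : \rank (imy A y) = k ->
  perpproj (y *m A^T) (imy A y) = (dotv c c)^-1 *: c.
Proof.
move=> rkI; set c' := _ *: c.
have cc0 : dotv c c != 0 by rewrite dotv_eq0 coef_neq0.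
have -> : y *m A^T = c' + (y *m A^T - c') by rewrite addrC subrK.
apply: perpprojDl.
  apply/sub_kermxP; rewrite -scalemxAl -[c *m _]trmxK trmx_mul trmxK.
  by rewrite imy_mul_tr // trmx0 scaler0.
apply: submx_trans (perpmx_row_sub coef_neq0 (imy_mul_tr yc) rkI).
apply/sub_kermxP; rewrite mulmxBl mulmx_tr_coef -scalemxAl mulmx_tr_dotv.
by rewrite scale_scalar_mx mulVf // subrr.
Qed.

Lemma normv_perpproj_imy : \rank (imy A y) = k ->
  normv (perpproj (y *m A^T) (imy A y)) = (normv c)^-1.
Proof.
move=> rkI; have c_gt0 : 0 < normv c by rewrite normv_gt0 coef_neq0.
rewrite perpproj_imy // normvZ -sqr_normv ger0_norm ?invr_ge0 ?exprn_ge0 ?ltW //.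
by field; rewrite gt_eqF.
Qed.

End RowSpaceUnitVector.

Unset Implicit Arguments. Set Strict Implicit.

Theorem lemma3p13 (R : rcfType) (s n : nat) (A : 'M[R]_(s, n)) (y : 'rV[R]_n)
    (Q : 'M[R]_(s, n)) (P0 : 'M[R]_s) (Qy : 'M[R]_(s.-1, n)) (Py : 'M[R]_(s.-1, s)) :
  \rank A = s -> (s <= n)%N ->
  (y <= kerperp A)%MS -> normv y = 1 ->
  onb Q (kerperp A) -> onb P0 (1%:M : 'M[R]_s) ->
  onb Qy (Wy A y) -> onb Py (imy A y) ->
  let v : 'cV[R]_s := (pinv A)^T *m y^T in
  normv v^T = `|\det (Qy *m A^T *m Py^T)| / `|\det (Q *m A^T *m P0^T)|
  /\ normv v^T = 1 / normv (perpproj (y *m A^T) (imy A y)).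
Proof.
case: s A Q P0 Qy Py => [|k] A Q P0 Qy Py rkA _ yk ny
  [QQ /eqmxP Qk] [PP _] [QyQy /andP[QyW _]] [PyPy PyI] v;
  have /submxP[c yc] : (y <= A)%MS by rewrite -(kerperpE A).
  by move: ny (normv_gt0 y); rewrite yc thinmx0 mul0mx eqxx => ->; rewrite ltr01.
have fA : row_free A by rewrite /row_free rkA.
have -> : v^T = c by rewrite /v trmx_mul !trmxK yc -mulmxA mulmx_pinv ?mulmx1.
have rkI : \rank (imy A y) = k by rewrite -(eqmx_rank PyI) orthonormal_rank.
split; last by rewrite (normv_perpproj_imy yc ny rkI) div1r invrK.
have PyI' : (Py <= imy A y)%MS by case/andP: PyI.
exact (normv_coef_det_ratio yc ny fA QQ (eqmx_trans Qk (kerperpE A)) PP QyQy QyW PyPy PyI').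
Qed.
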